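(* Let $A$ and $B$ be layouts and $\bar S$ a nested tuple such that both $\mathrm{shape}(A)$ and $\mathrm{shape}(B)$ refine $\bar S$. Then $\Phi_A=\Phi_B$ if and only if $\mathrm{coal}(A,\bar S)=\mathrm{coal}(B,\bar S)$.
   Context: A nested tuple (of integers) is either an integer (depth $0$) or a finite tuple $(X_1,\dots,X_r)$ of nested tuples (rank $r$, modes $X_i$); its flattening $X^\flat$ lists the integer leaves left to right, $\mathrm{len}(X)$ is its length, $\mathrm{entry}_i(X)$ its $i$-th entry, $\mathrm{size}(X)$ the product of entries. A layout $L=S:D$ consists of nested tuples $S$ (positive) and $D$ (nonnegative) of the same nesting pattern; $L^\flat=S^\flat:D^\flat$; the layout function of a flat layout $(s_i):(d_i)$ is $\Phi(x)=\sum x_id_i$, $x_i=\lfloor x/(s_1\cdots s_{i-1})\rfloor\bmod s_i$, on $[0,\prod s_i)$, and $\Phi_L=\Phi_{L^\flat}$. Flat $\mathrm{coal}^\flat$: remove modes with $s_i=1$, then repeatedly replace adjacent modes $s_i,s_{i+1}:d_i,d_{i+1}$ with $d_{i+1}=s_id_i$ by $s_is_{i+1}:d_i$. For a layout $L$ with $\mathrm{coal}^\flat(L^\flat)=(s_1,\dots,s_k):(d_1,\dots,d_k)$: $\mathrm{coal}(L)$ is this flat layout if $k>1$, $s_1:d_1$ (depth $0$) if $k=1$, and $1:0$ if $k=0$. Refinement: $X'$ refines $X$ if $X$ is an integer equal to $\mathrm{size}(X')$, or both have depth $>0$, equal rank, and each mode of $X'$ refines the corresponding mode of $X$. If $S$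 refines $\bar S$ with $\mathrm{len}(\bar S)=m$, then $S$ is obtained from $\bar S$ by replacing its $i$-th leaf by a nested tuple $S_i$ (of size $\mathrm{entry}_i(\bar S)$); for a layout $L=S:D$ the $i$-th relative mode is $L_i=S_i:D_i$ with $D_i$ the corresponding part of $D$. The relative coalesce $\mathrm{coal}(L,\bar S)$ is the layout obtained from the nesting pattern of $\bar S$ by putting the layout $\mathrm{coal}(L_i)$ (shape and stride simultaneously) in place of the $i$-th leaf, for each $1\le i\le m$. *)

From Stdlib Require Import List Arith.
Import ListNotations.

Inductive ntup : Type :=
| NLeaf (n : nat)
| NNode (l : list ntup).

(* A layout S:D stored as a nested tuple of (shape, stride) pairs, so that S
   and D automatically share the same nesting pattern. *)
Inductive layout : Type :=
| LLeaf (s d : nat)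
| LNode (l : list layout).

Fixpoint shape (L : layout) : ntup :=
  match L with
  | LLeaf s _ => NLeaf s
  | LNode l => NNode (map shape l)
  end.

Fixpoint stride (L : layout) : ntup :=
  match L with
  | LLeaf _ d => NLeaf d
  | LNode l => NNode (map stride l)
  end.

Fixpoint nt_flat (X : ntup) : list nat :=
  match X with
  | NLeaf n => [n]
  | NNode l => flat_map nt_flat l
  end.

Definition nt_size (X : ntup) : nat := fold_right Nat.mul 1 (nt_flat X).

Fixpoint lay_flat (L : layout) : list (nat * nat) :=
  match L with
  | LLeaf s d => [(s, d)]
  | LNode l => flat_map lay_flat l
  end.

Definition is_layout (L : layout) : Prop :=
  Forall (fun n => 0 < n) (nt_flat (shape L)).

Definition flat_phi (m : list (nat * nat)) (x : nat) : nat :=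
  fold_right Nat.add 0
    (map (fun i =>
            let s := map fst m in
            let xi := (x / fold_right Nat.mul 1 (firstn i s)) mod (nth i s 1) in
            xi * nth i (map snd m) 0)
         (seq 0 (length m))).

Definition Phi (L : layout) (x : nat) : nat := flat_phi (lay_flat L) x.

Definition phi_eq (A B : layout) : Prop :=
  nt_size (shape A) = nt_size (shape B) /\
  forall x, x < nt_size (shape A) -> Phi A x = Phi B x.

(* Flat coalesce: drop modes with s_i = 1, then merge adjacent modes
   (s_i,d_i),(s_{i+1},d_{i+1}) with d_{i+1} = s_i d_i into (s_i s_{i+1}, d_i)
   until no merge is possible (merging is confluent; we merge right-to-left). *)
Fixpoint merge_modes (m : list (nat * nat)) : list (nat * nat) :=
  match m with
  | [] => []
  | (s1, d1) :: r =>
      match merge_modes r with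
      | (s2, d2) :: rest =>
          if Nat.eqb d2 (s1 * d1) then (s1 * s2, d1) :: rest
          else (s1, d1) :: (s2, d2) :: rest
      | [] => [(s1, d1)]
      end
  end.

Definition coal_flat (m : list (nat * nat)) : list (nat * nat) :=
  merge_modes (filter (fun p => negb (Nat.eqb (fst p) 1)) m).

Definition coal (L : layout) : layout :=
  match coal_flat (lay_flat L) with
  | [] => LLeaf 1 0
  | [(s, d)] => LLeaf s d
  | c => LNode (map (fun p => LLeaf (fst p) (snd p)) c)
  end.

Fixpoint refines (X' X : ntup) {struct X} : Prop :=
  match X with
  | NLeaf n => nt_size X' = n
  | NNode l =>
      match X' with
      | NLeaf _ => False
      | NNode l' =>
          (fix go (l' l : list ntup) {struct l} : Prop :=
             match l', l with
             | [], [] => True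
             | a' :: r', a :: r => refines a' a /\ go r' r
             | _, _ => False
             end) l' l
      end
  end.

(* Relative coalesce coal(L, Sbar): replace the i-th leaf of Sbar by coal(L_i),
   L_i being the i-th relative mode of L. (Only meaningful when shape L
   refines Sbar; the fallback branches are never used in that case.) *)
Fixpoint rel_coal (L : layout) (X : ntup) {struct X} : layout :=
  match X with
  | NLeaf _ => coal L
  | NNode l =>
      match L with
      | LLeaf _ _ => L
      | LNode ls =>
          LNode ((fix go (ls : list layout) (l : list ntup) {struct l} : list layout :=
                    match ls, l with
                    | a :: r, b :: r' => rel_coal a b :: go r r'
                    | _, _ => []
                    end) ls l)
      end
  end.

(** Coalescing preserves the layout function and the size, and a coalesced
    mode list (all shapes > 1, no two adjacent modes mergeable) is determined
    by its function: [Φ(1)] is the first stride [d], the first shape [s] is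
    the first point where [Φ(x) = x d] fails (there the next stride would have
    to be [s d], which coalescing forbids), and evaluating at multiples of [s]
    peels the first mode off.  Since [shape A] and [shape B] refine [Sbar],
    both flattenings split into consecutive blocks of equal sizes, one per leaf
    of [Sbar]; the layout function of a concatenation is the mixed-radix
    combination of the block functions, so [Φ_A = Φ_B] holds iff it holds
    blockwise, i.e. iff the coalesced blocks agree. *)

From Stdlib Require Import List Arith Lia.
Import ListNotations.

Fixpoint modes_fun (m : list (nat * nat)) (x : nat) : nat :=
  match m with
  | [] => 0
  | (s, d) :: r => x mod s * d + modes_fun r (x / s)
  end.

Definition prod_nat (l : list nat) : nat := fold_right Nat.mul 1 l.

Definition modes_size (m : list (nat * nat)) : nat := prod_nat (map fst m).

Definition positive_modes (m : list (nat * nat)) : Prop :=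
  Forall (fun p => 0 < fst p) m.

Definition same_fun (m1 m2 : list (nat * nat)) : Prop :=
  modes_size m1 = modes_size m2 /\
  forall x, x < modes_size m1 -> modes_fun m1 x = modes_fun m2 x.

Lemma flat_phi_modes_fun m x : flat_phi m x = modes_fun m x.
Proof.
  revert x; induction m as [|[s d] r IH]; intro x; [reflexivity|].
  unfold flat_phi. cbn [length seq map fold_right].
  rewrite <- seq_shift, map_map.
  cbn [firstn fold_right nth map fst snd].
  rewrite Nat.div_1_r. cbn [modes_fun]. f_equal.
  rewrite <- IH. unfold flat_phi. f_equal. apply map_ext. intro i.
  rewrite Nat.Div0.div_div. reflexivity.
Qed.

Lemma modes_fun_0 m : modes_fun m 0 = 0.
Proof.
  induction m as [|[s d] r IH]; [reflexivity|]. cbn.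
  rewrite Nat.Div0.mod_0_l, Nat.Div0.div_0_l, IH. reflexivity.
Qed.

Lemma modes_fun_cons s d r x :
  modes_fun ((s, d) :: r) x = x mod s * d + modes_fun r (x / s).
Proof. reflexivity. Qed.

Lemma modes_fun_cons_lt s d r x : x < s -> modes_fun ((s, d) :: r) x = x * d.
Proof.
  intro Hx. cbn [modes_fun].
  rewrite Nat.mod_small, Nat.div_small, modes_fun_0 by exact Hx. lia.
Qed.

Lemma prod_nat_app a b : prod_nat (a ++ b) = prod_nat a * prod_nat b.
Proof. unfold prod_nat. induction a; simpl; lia. Qed.

Lemma modes_size_cons s d r : modes_size ((s, d) :: r) = s * modes_size r.
Proof. reflexivity. Qed.

Lemma modes_size_app m r : modes_size (m ++ r) = modes_size m * modes_size r.
Proof. unfold modes_size. rewrite map_app. apply prod_nat_app. Qed.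

Lemma modes_size_pos m : positive_modes m -> 0 < modes_size m.
Proof.
  induction 1 as [|[s d] r Hs _ IH]; [unfold modes_size; simpl; lia|].
  rewrite modes_size_cons. cbn [fst] in Hs. nia.
Qed.

Lemma modes_fun_app m r x : positive_modes m ->
  modes_fun (m ++ r) x = modes_fun m (x mod modes_size m) + modes_fun r (x / modes_size m).
Proof.
  intro H; revert x; induction H as [|[s d] m Hs Hm IH]; intro x.
  - change (modes_fun r x = 0 + modes_fun r (x / 1)). rewrite Nat.div_1_r. reflexivity.
  - cbn [fst] in Hs. cbn [app modes_fun]. rewrite IH, modes_size_cons.
    assert (Pm := modes_size_pos _ Hm).
    assert (Hx : x mod s < s) by (apply Nat.mod_upper_bound; lia).
    rewrite <- Nat.Div0.div_div, Nat.Div0.mod_mul_r.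
    replace (x mod s + s * ((x / s) mod modes_size m))
      with (x mod s + ((x / s) mod modes_size m) * s) by lia.
    rewrite Nat.Div0.mod_add, Nat.div_add by lia.
    rewrite (Nat.mod_small (x mod s)), (Nat.div_small (x mod s)) by exact Hx.
    simpl. lia.
Qed.

Lemma same_fun_sym m1 m2 : same_fun m1 m2 -> same_fun m2 m1.
Proof.
  intros [Hs Hf]. split; [congruence|].
  intros x Hx. symmetry. apply Hf. lia.
Qed.

(* Mixed radix: [x] below the total size is determined by its residue modulo
   the size of the first block and its quotient. *)
Lemma same_fun_app m1 m2 r1 r2 :
  positive_modes m1 -> positive_modes m2 -> positive_modes r1 ->
  modes_size m1 = modes_size m2 -> modes_size r1 = modes_size r2 ->
  same_fun (m1 ++ r1) (m2 ++ r2) <-> same_fun m1 m2 /\ same_fun r1 r2.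
Proof.
  intros H1 H2 H3 E1 E2. unfold same_fun. rewrite !modes_size_app.
  assert (P := modes_size_pos _ H1). assert (Q := modes_size_pos _ H3).
  split.
  - intros [_ Hf]. split; split; auto.
    + intros y Hy. specialize (Hf y ltac:(nia)).
      rewrite !modes_fun_app in Hf by assumption. rewrite <- E1 in Hf.
      rewrite Nat.mod_small, Nat.div_small, !modes_fun_0 in Hf by exact Hy. lia.
    + intros z Hz. specialize (Hf (z * modes_size m1) ltac:(nia)).
      rewrite !modes_fun_app in Hf by assumption. rewrite <- E1 in Hf.
      rewrite Nat.Div0.mod_mul, Nat.div_mul, !modes_fun_0 in Hf by lia. exact Hf.
  - intros [[_ Ha] [_ Hb]]. split; [congruence|].
    intros x Hx. rewrite !modes_fun_app by assumption. rewrite <- E1, Ha, Hb; [reflexivity| |].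
    + apply Nat.Div0.div_lt_upper_bound. nia.
    + apply Nat.mod_upper_bound. lia.
Qed.

Definition drop_unit_modes (m : list (nat * nat)) : list (nat * nat) :=
  filter (fun p => negb (Nat.eqb (fst p) 1)) m.

Lemma modes_fun_drop_unit_modes m x : modes_fun (drop_unit_modes m) x = modes_fun m x.
Proof.
  revert x; induction m as [|[s d] r IH]; intro x; [reflexivity|].
  unfold drop_unit_modes in *; cbn [filter fst].
  destruct (Nat.eqb_spec s 1) as [->|Hs]; cbn [negb modes_fun]; rewrite IH; [|reflexivity].
  rewrite Nat.mod_1_r, Nat.div_1_r. reflexivity.
Qed.

Lemma modes_size_drop_unit_modes m : modes_size (drop_unit_modes m) = modes_size m.
Proof.
  induction m as [|[s d] r IH]; [reflexivity|].
  unfold drop_unit_modes in *; cbn [filter fst].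
  destruct (Nat.eqb_spec s 1) as [->|Hs]; cbn [negb]; rewrite !modes_size_cons, <- IH; lia.
Qed.

Lemma modes_fun_merge_modes m x : modes_fun (merge_modes m) x = modes_fun m x.
Proof.
  revert x; induction m as [|[s1 d1] r IH]; intro x; [reflexivity|].
  cbn [merge_modes modes_fun]. rewrite <- IH.
  destruct (merge_modes r) as [|[s2 d2] rest]; [reflexivity|].
  destruct (Nat.eqb_spec d2 (s1 * d1)) as [Hd|Hd]; [|reflexivity].
  cbn [modes_fun]. rewrite Nat.Div0.mod_mul_r, Nat.Div0.div_div, Hd. nia.
Qed.

Lemma modes_size_merge_modes m : modes_size (merge_modes m) = modes_size m.
Proof.
  induction m as [|[s1 d1] r IH]; [reflexivity|].
  cbn [merge_modes]. rewrite modes_size_cons, <- IH.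
  destruct (merge_modes r) as [|[s2 d2] rest]; [reflexivity|].
  destruct (Nat.eqb_spec d2 (s1 * d1)); rewrite !modes_size_cons; lia.
Qed.

Lemma modes_fun_coal_flat m x : modes_fun (coal_flat m) x = modes_fun m x.
Proof.
  unfold coal_flat. rewrite modes_fun_merge_modes.
  apply modes_fun_drop_unit_modes.
Qed.

Lemma modes_size_coal_flat m : modes_size (coal_flat m) = modes_size m.
Proof.
  unfold coal_flat. rewrite modes_size_merge_modes.
  apply modes_size_drop_unit_modes.
Qed.

Fixpoint coalesced (m : list (nat * nat)) : Prop :=
  match m with
  | [] => True
  | (s, d) :: r =>
      1 < s /\ match r with [] => True | (_, e) :: _ => e <> s * d end /\ coalesced r
  end.

Lemma coalesced_tail s d r : coalesced ((s, d) :: r) -> coalesced r.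
Proof. cbn. tauto. Qed.

Lemma coalesced_positive m : coalesced m -> positive_modes m.
Proof.
  induction m as [|[s d] r IH]; intro H; constructor.
  - cbn in H |- *. lia.
  - exact (IH (coalesced_tail _ _ _ H)).
Qed.

Lemma merge_modes_coalesced m : Forall (fun p => 1 < fst p) m -> coalesced (merge_modes m).
Proof.
  induction 1 as [|[s1 d1] r H1 _ IH]; [exact I|]. cbn [fst] in H1.
  cbn [merge_modes].
  destruct (merge_modes r) as [|[s2 d2] rest]; [cbn; auto|].
  destruct (Nat.eqb_spec d2 (s1 * d1)) as [Hd|Hd]; cbn in IH |- *; [|tauto].
  destruct IH as (Hs2 & Hn & Hrest).
  split; [nia|]. split; [|exact Hrest].
  destruct rest as [|[s3 d3] rr]; [exact I|]. subst. nia.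
Qed.

Lemma coal_flat_coalesced m : positive_modes m -> coalesced (coal_flat m).
Proof.
  intro H. apply merge_modes_coalesced. unfold positive_modes in H.
  rewrite Forall_forall in *. intros p Hp.
  apply filter_In in Hp. destruct Hp as [Hp Hq]. specialize (H p Hp).
  destruct (Nat.eqb_spec (fst p) 1); cbn in Hq; [discriminate|lia].
Qed.

Lemma coalesced_head_stride s d r t e q :
  coalesced ((s, d) :: r) -> coalesced ((t, e) :: q) ->
  same_fun ((s, d) :: r) ((t, e) :: q) -> d = e.
Proof.
  intros N1 N2 [_ Hf].
  assert (Pr := modes_size_pos _ (coalesced_positive _ (coalesced_tail _ _ _ N1))).
  assert (Hs : 1 < s) by apply N1. assert (Ht : 1 < t) by apply N2.
  specialize (Hf 1 ltac:(rewrite modes_size_cons; nia)).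
  rewrite !modes_fun_cons_lt in Hf by assumption. lia.
Qed.

(* At [x = s] the first list gives the second stride, the second list gives
   [s * d]; coalescing forbids their equality. *)
Lemma coalesced_head_shape_le s d r t q :
  coalesced ((s, d) :: r) -> coalesced ((t, d) :: q) ->
  same_fun ((s, d) :: r) ((t, d) :: q) -> t <= s.
Proof.
  intros N1 N2 [Hp Hf].
  destruct (Nat.le_gt_cases t s) as [Hle|Hlt]; [exact Hle|exfalso].
  assert (Pq := modes_size_pos _ (coalesced_positive _ (coalesced_tail _ _ _ N2))).
  assert (Hs : 1 < s) by apply N1.
  rewrite (modes_size_cons s), (modes_size_cons t) in Hp.
  destruct r as [|[s2 d2] r].
  - change (modes_size []) with 1 in Hp. nia.
  - specialize (Hf s ltac:(rewrite modes_size_cons, Hp; nia)).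
    rewrite (modes_fun_cons_lt t) in Hf by exact Hlt.
    rewrite modes_fun_cons, Nat.Div0.mod_same, Nat.div_same in Hf by lia.
    destruct N1 as (_ & Hd2 & N1).
    assert (Hs2 : 1 < s2) by apply N1.
    rewrite modes_fun_cons_lt in Hf by exact Hs2. lia.
Qed.

Lemma coalesced_same_fun_eq m1 : forall m2,
  coalesced m1 -> coalesced m2 -> same_fun m1 m2 -> m1 = m2.
Proof.
  induction m1 as [|[s d] r1 IH]; intros [|[t e] r2] N1 N2 Hsf.
  - reflexivity.
  - exfalso. destruct Hsf as [Hp _]. destruct N2 as (Ht & _ & N2).
    assert (P := modes_size_pos _ (coalesced_positive _ N2)).
    rewrite modes_size_cons in Hp. change (modes_size []) with 1 in Hp. nia.
  - exfalso. destruct Hsf as [Hp _]. destruct N1 as (Hs & _ & N1).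
    assert (P := modes_size_pos _ (coalesced_positive _ N1)).
    rewrite modes_size_cons in Hp. change (modes_size []) with 1 in Hp. nia.
  - assert (Hde : d = e) by exact (coalesced_head_stride _ _ _ _ _ _ N1 N2 Hsf).
    subst e.
    assert (Hst : s = t).
    { apply Nat.le_antisymm.
      - exact (coalesced_head_shape_le _ _ _ _ _ N2 N1 (same_fun_sym _ _ Hsf)).
      - exact (coalesced_head_shape_le _ _ _ _ _ N1 N2 Hsf). }
    subst t.
    assert (Hs : 1 < s) by apply N1.
    assert (P1 := coalesced_positive _ (coalesced_tail _ _ _ N1)).
    assert (Hr : modes_size r1 = modes_size r2).
    { destruct Hsf as [Hp _]. rewrite !modes_size_cons in Hp. nia. }
    assert (Hpos : positive_modes [(s, d)]) by (repeat constructor; cbn; lia).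
    apply (same_fun_app [(s, d)] [(s, d)] r1 r2 Hpos Hpos P1 eq_refl Hr) in Hsf.
    f_equal. apply IH; [exact (coalesced_tail _ _ _ N1)|exact (coalesced_tail _ _ _ N2)|].
    apply Hsf.
Qed.

Lemma same_fun_iff_coal_flat m1 m2 : positive_modes m1 -> positive_modes m2 ->
  same_fun m1 m2 <-> coal_flat m1 = coal_flat m2.
Proof.
  intros H1 H2. split.
  - intros [Hp Hf]. apply coalesced_same_fun_eq; auto using coal_flat_coalesced.
    split.
    + rewrite !modes_size_coal_flat. exact Hp.
    + intros x Hx. rewrite modes_size_coal_flat in Hx. rewrite !modes_fun_coal_flat. auto.
  - intro E. split.
    + rewrite <- (modes_size_coal_flat m1), <- (modes_size_coal_flat m2), E. reflexivity.
    + intros x _. rewrite <- (modes_fun_coal_flat m1), <- (modes_fun_coal_flat m2), E.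
      reflexivity.
Qed.

Definition layout_of_modes (c : list (nat * nat)) : layout :=
  match c with
  | [] => LLeaf 1 0
  | [(s, d)] => LLeaf s d
  | c => LNode (map (fun p => LLeaf (fst p) (snd p)) c)
  end.

Lemma coal_layout_of_modes L : coal L = layout_of_modes (coal_flat (lay_flat L)).
Proof.
  unfold coal, layout_of_modes.
  destruct (coal_flat (lay_flat L)) as [|[s d] [|]]; reflexivity.
Qed.

Lemma map_leaf_inj c1 c2 :
  map (fun p : nat * nat => LLeaf (fst p) (snd p)) c1 =
  map (fun p => LLeaf (fst p) (snd p)) c2 -> c1 = c2.
Proof.
  revert c2; induction c1 as [|[a b] r IH]; intros [|[a' b'] r'] H;
    try discriminate; [reflexivity|].
  cbn in H. injection H as -> -> H. f_equal. auto.
Qed.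

(* [LLeaf 1 0] encodes the empty list; it is not confused with a one-mode
   list because coalesced shapes exceed 1. *)
Lemma layout_of_modes_inj c1 c2 : coalesced c1 -> coalesced c2 ->
  layout_of_modes c1 = layout_of_modes c2 -> c1 = c2.
Proof.
  intros N1 N2 H.
  destruct c1 as [|[s d] [|[s' d'] r]]; destruct c2 as [|[t e] [|[t' e'] r2]];
    cbn in H, N1, N2; try discriminate; try reflexivity.
  - injection H as <- <-. lia.
  - injection H as -> ->. lia.
  - injection H as -> ->. reflexivity.
  - apply map_leaf_inj. exact (f_equal (fun L => match L with LNode l => l | _ => [] end) H).
Qed.

Lemma same_fun_iff_coal A B :
  positive_modes (lay_flat A) -> positive_modes (lay_flat B) ->
  same_fun (lay_flat A) (lay_flat B) <-> coal A = coal B.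
Proof.
  intros H1 H2. rewrite same_fun_iff_coal_flat, !coal_layout_of_modes by assumption.
  split; [intros ->; reflexivity|].
  apply layout_of_modes_inj; apply coal_flat_coalesced; assumption.
Qed.

Fixpoint ntup_nested_ind (P : ntup -> Prop) (HL : forall n, P (NLeaf n))
  (HN : forall l, Forall P l -> P (NNode l)) (X : ntup) : P X :=
  match X with
  | NLeaf n => HL n
  | NNode l => HN l ((fix go (l : list ntup) : Forall P l :=
                        match l with
                        | [] => Forall_nil _
                        | x :: r => Forall_cons _ (ntup_nested_ind P HL HN x) (go r)
                        end) l)
  end.

Fixpoint layout_nested_ind (P : layout -> Prop) (HL : forall s d, P (LLeaf s d))
  (HN : forall l, Forall P l -> P (LNode l)) (L : layout) : P L :=
  match L with
  | LLeaf s d => HL s d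
  | LNode l => HN l ((fix go (l : list layout) : Forall P l :=
                        match l with
                        | [] => Forall_nil _
                        | x :: r => Forall_cons _ (layout_nested_ind P HL HN x) (go r)
                        end) l)
  end.

Lemma nt_flat_shape L : nt_flat (shape L) = map fst (lay_flat L).
Proof.
  induction L as [s d|l IH] using layout_nested_ind; [reflexivity|].
  cbn [shape nt_flat lay_flat]. induction IH as [|a r Ha _ IHr]; [reflexivity|].
  cbn [map flat_map]. rewrite map_app, Ha, IHr. reflexivity.
Qed.

Lemma nt_size_shape L : nt_size (shape L) = modes_size (lay_flat L).
Proof. unfold nt_size, modes_size, prod_nat. rewrite nt_flat_shape. reflexivity. Qed.

Lemma is_layout_positive_modes L : is_layout L -> positive_modes (lay_flat L).
Proof. unfold is_layout, positive_modes. rewrite nt_flat_shape, Forall_map. auto. Qed.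

Lemma phi_eq_same_fun A B : phi_eq A B <-> same_fun (lay_flat A) (lay_flat B).
Proof.
  unfold phi_eq, same_fun, Phi. rewrite !nt_size_shape.
  split; intros [H1 H2]; split; auto; intros x Hx; specialize (H2 x Hx);
    rewrite !flat_phi_modes_fun in *; auto.
Qed.

Lemma refines_node l' l : refines (NNode l') (NNode l) <-> Forall2 refines l' l.
Proof.
  revert l'; induction l as [|a l IH]; intros [|a' l']; cbn.
  - split; auto.
  - split; [tauto|intro H; inversion H].
  - split; [tauto|intro H; inversion H].
  - specialize (IH l'). cbn in IH. rewrite IH.
    split; [intros [H1 H2]; constructor; auto|intro H; inversion H; auto].
Qed.

Lemma nt_size_node l : nt_size (NNode l) = prod_nat (map nt_size l).
Proof.
  unfold nt_size. cbn [nt_flat]. induction l as [|a r IH]; [reflexivity|].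
  cbn [flat_map map]. fold (prod_nat (nt_flat a ++ flat_map nt_flat r)).
  rewrite prod_nat_app. unfold prod_nat in *. rewrite IH. reflexivity.
Qed.

Lemma refines_nt_size X : forall X', refines X' X -> nt_size X' = nt_size X.
Proof.
  induction X as [n|l IH] using ntup_nested_ind; intros X' H.
  - cbn in H. rewrite H. unfold nt_size; cbn; lia.
  - destruct X' as [n|l']; [destruct H|].
    apply refines_node in H. rewrite !nt_size_node. f_equal.
    revert l' H. induction IH as [|a r Ha _ IHr]; intros l' H; inversion H; subst;
      cbn; f_equal; auto.
Qed.

Lemma refines_modes_size A B X : refines (shape A) X -> refines (shape B) X ->
  modes_size (lay_flat A) = modes_size (lay_flat B).
Proof.
  intros RA RB. rewrite <- !nt_size_shape.
  rewrite (refines_nt_size X (shape A) RA), (refines_nt_size X (shape B) RB).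
  reflexivity.
Qed.

Fixpoint rel_coal_list (ls : list layout) (l : list ntup) : list layout :=
  match ls, l with
  | a :: r, b :: r' => rel_coal a b :: rel_coal_list r r'
  | _, _ => []
  end.

Lemma rel_coal_node ls l : rel_coal (LNode ls) (NNode l) = LNode (rel_coal_list ls l).
Proof.
  revert ls; induction l as [|b l IH]; intros [|a ls]; try reflexivity.
  specialize (IH ls). cbn in IH |- *. injection IH as IH. rewrite IH. reflexivity.
Qed.

Definition rel_coal_detects_fun (X : ntup) : Prop :=
  forall A B, positive_modes (lay_flat A) -> positive_modes (lay_flat B) ->
  refines (shape A) X -> refines (shape B) X ->
  same_fun (lay_flat A) (lay_flat B) <-> rel_coal A X = rel_coal B X.

Lemma rel_coal_list_detects_fun l : Forall rel_coal_detects_fun l ->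
  forall as_ bs,
  positive_modes (lay_flat (LNode as_)) -> positive_modes (lay_flat (LNode bs)) ->
  Forall2 refines (map shape as_) l -> Forall2 refines (map shape bs) l ->
  same_fun (lay_flat (LNode as_)) (lay_flat (LNode bs)) <->
  rel_coal_list as_ l = rel_coal_list bs l.
Proof.
  induction 1 as [|X l HX _ IH]; intros as_ bs Pa Pb Ra Rb.
  - destruct as_; [|inversion Ra]. destruct bs; [|inversion Rb].
    split; [reflexivity|]. intros _. split; [reflexivity|]. auto.
  - destruct as_ as [|a as_]; [inversion Ra|]. destruct bs as [|b bs]; [inversion Rb|].
    inversion Ra; subst. inversion Rb; subst.
    change (lay_flat (LNode (?c :: ?cs))) with (lay_flat c ++ lay_flat (LNode cs)) in *.
    apply Forall_app in Pa as [Pa1 Pa2]. apply Forall_app in Pb as [Pb1 Pb2].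
    assert (E1 := refines_modes_size a b X ltac:(assumption) ltac:(assumption)).
    assert (E2 := refines_modes_size (LNode as_) (LNode bs) (NNode l)
                    ltac:(apply refines_node; assumption) ltac:(apply refines_node; assumption)).
    rewrite same_fun_app by assumption.
    rewrite (HX a b), (IH as_ bs) by assumption.
    cbn [rel_coal_list]. split; [intros [-> ->]; reflexivity|intro H; injection H; auto].
Qed.

Lemma rel_coal_detects_fun_all X : rel_coal_detects_fun X.
Proof.
  induction X as [n|l IH] using ntup_nested_ind; intros A B PA PB RA RB.
  - apply same_fun_iff_coal; assumption.
  - destruct A as [s d|as_]; [destruct RA|]. destruct B as [t e|bs]; [destruct RB|].
    cbn [shape] in RA, RB. apply refines_node in RA. apply refines_node in RB.
    rewrite !rel_coal_node, (rel_coal_list_detects_fun l IH as_ bs) by assumption.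
    split; [intros ->; reflexivity|intro H; injection H; auto].
Qed.

Theorem mainTheorem17 (A B : layout) (Sbar : ntup) :
  is_layout A -> is_layout B ->
  refines (shape A) Sbar -> refines (shape B) Sbar ->
  (phi_eq A B <-> rel_coal A Sbar = rel_coal B Sbar).
Proof.
  intros HA HB RA RB. rewrite phi_eq_same_fun.
  apply rel_coal_detects_fun_all; auto using is_layout_positive_modes.
Qed.
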